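(* Let $\theta:\mathbb{A}\to\mathbb{A}^\lambda$ be a primitive substitution satisfying the standing assumptions, and let $\Theta=\theta\vee\widetilde\theta:\overline{\mathcal{X}}\to\overline{\mathcal{X}}^\lambda$. Then $\Theta$ is primitive and $h(\Theta)=h(\theta)$.
   Context: Substitution $\theta:\mathbb{A}\to\mathbb{A}^\lambda$, $\lambda\ge2$; primitive: some iterate $\theta^k(a)$ contains all letters for each $a$. Standing assumptions: $\theta(a_0)_0=a_0$, $\theta$ injective on letters, subshift infinite. Height of a primitive substitution $\zeta$: $h(\zeta)=\max\{m\ge1:\gcd(m,\lambda)=1,\ m\mid\gcd\{r\ge1:v[r]=v[0]\}\}$ where $v$ is a fixed point of a suitable power of $\zeta$ (independent of choices). Let $\mathcal{X}$ be the set of $M\subset\mathbb{A}$ with $|M|=c(\theta):=\min_{k\ge1,0\le j<\lambda^k}|\{\theta^k(a)_j:a\in\mathbb{A}\}|$ and $M=\{\theta^k(a)_j:a\in\mathbb{A}\}$ for some $k\ge1$, $0\le j<\lambda^k$; $\widetilde\theta:\mathcal{X}\to\mathcal{X}^\lambda$, $\widetilde\theta(M)_j=\{\theta(a)_j:a\in M\}$. Let $\overline{\mathcal{X}}=\{(a,M):M\in\mathcal{X},\ a\in M\}$ and $\Theta(a,M)_j=(\theta(a)_j,\widetilde\theta(M)_j)$ for $0\le j<\lambda$ (this maps $\overline{\mathcal{X}}$ into $\overline{\mathcal{X}}^\lambda$). *)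

From HB Require Import structures.
From mathcomp Require Import all_boot all_order ssralg ssrint.
Set Implicit Arguments. Unset Strict Implicit. Unset Printing Implicit Defensive.

(* A substitution of constant length lam on an alphabet T is a map
   z : T -> seq T with size (z a) = lam for all letters a.
   Words are seq T; z extends to words by concatenation. *)

Definition subst_word (T : Type) (z : T -> seq T) (w : seq T) : seq T :=
  flatten (map z w).

Definition subst_iter (T : Type) (z : T -> seq T) (k : nat) (w : seq T) : seq T :=
  iter k (subst_word z) w.

Definition letter_iter (T : Type) (z : T -> seq T) (k : nat) (a : T) : seq T :=
  subst_iter z k [:: a].

Definition primitive_on (T : eqType) (z : T -> seq T) (D : T -> Prop) : Prop :=
  forall a, D a -> exists2 k, 0 < k & forall b, D b -> b \in letter_iter z k a.

(* The one-sided fixed point v of z^p starting with a (when z^p(a)_0 = a):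
   v[r] = z^(p*(r+1))(a)_r  (the words z^(pn)(a) are nested prefixes). *)
Definition fixpt (T : Type) (z : T -> seq T) (p : nat) (a : T) (r : nat) : T :=
  nth a (letter_iter z (p * r.+1) a) r.

Definition divides_return_gcd (T : eqType) (z : T -> seq T) (p : nat) (a : T)
    (m : nat) : Prop :=
  forall r, 0 < r -> fixpt z p a r = fixpt z p a 0 -> m %| r.

Definition is_height (T : eqType) (z : T -> seq T) (D : T -> Prop) (lam : nat)
    (h : nat) : Prop :=
  forall p a, 0 < p -> D a -> nth a (letter_iter z p a) 0 = a ->
    [/\ 0 < h, coprime h lam, divides_return_gcd z p a h &
        forall m, 0 < m -> coprime m lam -> divides_return_gcd z p a m -> m <= h].

Definition in_language (A : eqType) (theta : A -> seq A) (w : seq A) : Prop :=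
  exists k a, infix w (letter_iter theta k a).

Definition in_subshift (A : eqType) (theta : A -> seq A) (x : int -> A) : Prop :=
  forall (i : int) (n : nat),
    in_language theta [seq x (i + (j%:Z))%R | j <- iota 0 n].

Definition subshift_infinite (A : eqType) (theta : A -> seq A) : Prop :=
  ~ exists n (f : 'I_n -> int -> A),
      forall x, in_subshift theta x -> exists i, x = f i.

Definition column (A : finType) (theta : A -> seq A) (k j : nat) : {set A} :=
  [set nth a (letter_iter theta k a) j | a : A].

Definition in_Xset (A : finType) (theta : A -> seq A) (lam : nat) (M : {set A})
    : Prop :=
  (exists k j, [/\ 0 < k, j < lam ^ k & M = column theta k j]) /\
  (forall k j, 0 < k -> j < lam ^ k -> #|M| <= #|column theta k j|).

Definition in_Xbar (A : finType) (theta : A -> seq A) (lam : nat)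
    (x : A * {set A}) : Prop :=
  in_Xset theta lam x.2 /\ x.1 \in x.2.

Definition Theta (A : finType) (theta : A -> seq A) (lam : nat)
    (x : A * {set A}) : seq (A * {set A}) :=
  [seq (nth x.1 (theta x.1) j, [set nth b (theta b) j | b in x.2]) | j <- iota 0 lam].

From HB Require Import structures.
From mathcomp Require Import all_boot all_order ssralg ssrint.
From mathcomp Require Import zify.
From Stdlib Require Import Classical.
Set Implicit Arguments. Unset Strict Implicit. Unset Printing Implicit Defensive.

(* Write [θ̃^n(M)_t] for the image of [M] under [b ↦ θ^n(b)_t]; then
   [Θ^n(a, M)_t = (θ^n(a)_t, θ̃^n(M)_t)].  Column maps cannot enlarge a set, so they
   send minimal columns to minimal columns, and a minimal column [N = θ̃^k(A)_j] is
   synchronising: [θ̃^k(M)_j = N] for every minimal [M].  Primitivity of [Θ] follows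
   by steering the first coordinate with the primitivity of [θ] and then applying
   the column map that produces the target.

   For the heights: if [m] is coprime to [λ] and divides every return time of a
   fixed point [v], then [v_i = v_i'] forces [i ≡ i' (mod m)], because [v_0] occurs
   at the same offset in the blocks [θ^E(v_i)] and [θ^E(v_i')] of [v] and [λ^E] is
   invertible mod [m].  As every fixed point of a power of [θ] occurs inside every
   other one, these [m] do not depend on the fixed point.  A fixed point [V] of a
   power of [Θ] satisfies [V_(iλ^E + j) = (θ^E(v_i)_j, V_0.2)] for the column
   [(E, j)] synchronising onto [V_0.2], so [V] and its first coordinate [v] admit
   the same [m]. *)

Lemma ltn_mul_add i a t b : i < a -> t < b -> i * b + t < a * b.
Proof. by move=> ? ?; nia. Qed.

Lemma ltn_exp_mulS lam p r : 1 < lam -> 0 < p -> r < lam ^ (p * r.+1).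
Proof.
move=> lam_gt1 p_gt0; apply: leq_trans (ltn_expl r lam_gt1) _.
by rewrite leq_pexp2l ?(ltnW lam_gt1) // (leq_trans (leqnSn r)) ?leq_pmull.
Qed.

Lemma eqn_modMr_coprime m L i i' : coprime m L ->
  (i * L == i' * L %[mod m]) = (i == i' %[mod m]).
Proof.
move=> co; wlog le_i'i : i i' / i' <= i.
  move=> wlog_le; case: (leqP i' i) => [|/ltnW] /wlog_le // eqLi.
  by rewrite eq_sym eqLi eq_sym.
by rewrite !eqn_mod_dvd ?leq_mul2r ?le_i'i ?orbT // -mulnBl Gauss_dvdl.
Qed.

Lemma eventually_fin (X : finType) (D : X -> Prop) (P : X -> nat -> Prop) :
  (forall x, D x -> exists K, forall n, K <= n -> P x n) ->
  exists K, forall x, D x -> forall n, K <= n -> P x n.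
Proof.
move=> evP.
suff [K HK] : exists K, forall x, x \in enum X -> D x -> forall n, K <= n -> P x n.
  by exists K => x; apply: HK; rewrite mem_enum.
elim: (enum X) => [|y s [K HK]]; first by exists 0.
have [Ky HKy] : exists Ky, D y -> forall n, Ky <= n -> P y n.
  by case: (classic (D y)) => [/evP[Ky HKy] | nDy]; [exists Ky | exists 0].
exists (maxn Ky K) => x /predU1P[-> | s_x] Dx n; rewrite geq_max => /andP[? ?].
  exact: HKy.
exact: HK.
Qed.

Lemma bounded_has_max (P : nat -> Prop) n0 B :
  P n0 -> (forall m, P m -> m <= B) -> exists2 h, P h & forall m, P m -> m <= h.
Proof.
move=> Pn0 bounded; apply: NNPP => no_max.
suff above k : exists2 n, P n & k <= n.
  by have [n /bounded] := above B.+1; rewrite leqNgt => /negP.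
elim: k => [|k [n Pn le_kn]]; first by exists n0.
have [m Pm lt_nm] : exists2 m, P m & n < m.
  apply: NNPP => no_larger; apply: no_max; exists n => // m Pm.
  by rewrite leqNgt; apply/negP => lt_nm; apply: no_larger; exists m.
by exists m; last exact: leq_ltn_trans lt_nm.
Qed.

Lemma size_flatten_const (U V : Type) (f : U -> seq V) L w :
  (forall x, size (f x) = L) -> size (flatten (map f w)) = L * size w.
Proof.
move=> size_f; elim: w => [|x w IH] /=; first by rewrite muln0.
by rewrite size_cat IH size_f mulnS.
Qed.

Lemma nth_flatten_const (U V : Type) (f : U -> seq V) L w i t d (e : U) :
  (forall x, size (f x) = L) -> i < size w -> t < L ->
  nth d (flatten (map f w)) (i * L + t) = nth d (f (nth e w i)) t.
Proof.
move=> size_f; elim: w i => [//|x w IH] [|i] /= lt_i lt_t.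
  by rewrite mul0n add0n nth_cat size_f lt_t.
by rewrite nth_cat size_f mulSn -addnA ltnNge leq_addr /= addKn IH.
Qed.

Section ConstantLength.
Variables (T : eqType) (z : T -> seq T) (lam : nat).
Hypothesis size_z : forall x, size (z x) = lam.

Lemma letter_iter1 a : letter_iter z 1 a = z a.
Proof. by rewrite /letter_iter /subst_iter /= /subst_word /= cats0. Qed.

Lemma subst_iter_cat n w1 w2 :
  subst_iter z n (w1 ++ w2) = subst_iter z n w1 ++ subst_iter z n w2.
Proof.
elim: n => [//|n IH]; rewrite /subst_iter !iterS -/(subst_iter z n _) IH.
by rewrite /subst_word map_cat flatten_cat.
Qed.

Lemma subst_iterE n w : subst_iter z n w = flatten (map (letter_iter z n) w).
Proof.
elim: w => [|x w IH]; last by rewrite -cat1s subst_iter_cat IH.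
by elim: n => [//|n IH]; rewrite /subst_iter iterS -/(subst_iter z n _) IH.
Qed.

Lemma letter_iterD n m a :
  letter_iter z (n + m) a = flatten (map (letter_iter z m) (letter_iter z n a)).
Proof. by rewrite -subst_iterE /letter_iter /subst_iter addnC iterD. Qed.

Lemma size_letter_iter n a : size (letter_iter z n a) = lam ^ n.
Proof.
elim: n => [//|n IH]; rewrite -addn1 letter_iterD (size_flatten_const _ (L := lam)).
  by rewrite IH addn1 expnSr mulnC.
by move=> x; rewrite letter_iter1 size_z.
Qed.

Lemma nth_letter_iterD n m a i t d e :
  i < lam ^ n -> t < lam ^ m ->
  nth d (letter_iter z (n + m) a) (i * lam ^ m + t) =
  nth d (letter_iter z m (nth e (letter_iter z n a) i)) t.
Proof.
move=> lt_i lt_t; rewrite letter_iterD (@nth_flatten_const _ _ _ (lam ^ m) _ i t d e) //.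
  by move=> x; rewrite size_letter_iter.
by rewrite size_letter_iter.
Qed.

Lemma mem_letter_iterD n m a b c :
  b \in letter_iter z n a -> c \in letter_iter z m b -> c \in letter_iter z (n + m) a.
Proof.
move=> ab bc.
have lt_i : index b (letter_iter z n a) < lam ^ n by rewrite -(size_letter_iter n a) index_mem.
have lt_t : index c (letter_iter z m b) < lam ^ m by rewrite -(size_letter_iter m b) index_mem.
have := nth_letter_iterD a c b lt_i lt_t; rewrite (nth_index b ab) (nth_index c bc) => <-.
by apply: mem_nth; rewrite size_letter_iter expnD ltn_mul_add.
Qed.

Section FixedPoint.
Hypothesis lam_gt1 : 1 < lam.
Variables (p : nat) (a : T).
Hypothesis p_gt0 : 0 < p.
Hypothesis fix_a : nth a (letter_iter z p a) 0 = a.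

Let lam_gt0 : 0 < lam. Proof. exact: ltnW. Qed.

Lemma letter_iter_fix_prefix N k r d : r < lam ^ (p * N) ->
  nth d (letter_iter z (p * (N + k)) a) r = nth d (letter_iter z (p * N) a) r.
Proof.
move=> lt_r; elim: k => [|k IH]; first by rewrite addn0.
have lt_r' : r < lam ^ (p * (N + k)).
  by rewrite (leq_trans lt_r) // leq_pexp2l // leq_mul2l leq_addr orbT.
rewrite addnS mulnS -(add0n r) -(mul0n (lam ^ (p * (N + k)))).
by rewrite (nth_letter_iterD _ _ a) ?expn_gt0 ?lam_gt0 // fix_a mul0n add0n IH.
Qed.

Lemma fixpt_nth N r : r < lam ^ (p * N) -> fixpt z p a r = nth a (letter_iter z (p * N) a) r.
Proof.
move=> lt_r; rewrite /fixpt.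
have lt_r1 := ltn_exp_mulS r lam_gt1 p_gt0.
by case: (leqP N r.+1) => [/subnKC | /ltnW /subnKC] <-; rewrite letter_iter_fix_prefix.
Qed.

Lemma fixpt0 : fixpt z p a 0 = a.
Proof. by rewrite /fixpt muln1 fix_a. Qed.

Lemma fixpt_block E i t : p %| E -> t < lam ^ E ->
  fixpt z p a (i * lam ^ E + t) = nth a (letter_iter z E (fixpt z p a i)) t.
Proof.
case/dvdnP=> e ->; rewrite mulnC => lt_t.
rewrite (fixpt_nth (N := i.+1 + e)); last by rewrite mulnDr expnD ltn_mul_add ?ltn_exp_mulS.
by rewrite mulnDr (nth_letter_iterD _ _ a) ?ltn_exp_mulS.
Qed.

Lemma fixpt_return_mod m q : divides_return_gcd z p a m -> fixpt z p a q = a -> q = 0 %[mod m].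
Proof.
move=> dvd_ret; case: q => [//|q] ret.
by rewrite mod0n; apply/eqP/dvd_ret; rewrite ?fixpt0.
Qed.

Lemma fixpt_eq_mod m :
  coprime m lam -> divides_return_gcd z p a m ->
  (forall i, exists K, forall n, K <= n -> a \in letter_iter z n (fixpt z p a i)) ->
  forall i i', fixpt z p a i = fixpt z p a i' -> i = i' %[mod m].
Proof.
move=> co dvd_ret occ i i' eq_ii'.
have [K HK] := occ i.
have a_in : a \in letter_iter z (p * K) (fixpt z p a i) by rewrite HK ?leq_pmull.
set s := index a (letter_iter z (p * K) (fixpt z p a i)).
have lt_s : s < lam ^ (p * K) by rewrite -(size_letter_iter _ (fixpt z p a i)) index_mem.
have ret i0 : fixpt z p a i0 = fixpt z p a i -> fixpt z p a (i0 * lam ^ (p * K) + s) = a.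
  by move=> eq_i0; rewrite fixpt_block ?dvdn_mulr // eq_i0 nth_index.
have := fixpt_return_mod dvd_ret (ret i erefl).
rewrite -(fixpt_return_mod dvd_ret (ret i' (esym eq_ii'))) => /eqP.
by rewrite eqn_modDr eqn_modMr_coprime ?coprimeXr // => /eqP.
Qed.

End FixedPoint.
End ConstantLength.

Lemma is_height_intro (T : eqType) (z : T -> seq T) (D : T -> Prop) lam
    (P : nat -> Prop) h :
  (forall p a m, 0 < p -> D a -> nth a (letter_iter z p a) 0 = a -> coprime m lam ->
     divides_return_gcd z p a m <-> P m) ->
  [/\ 0 < h, coprime h lam & P h] ->
  (forall m, 0 < m -> coprime m lam -> P m -> m <= h) ->
  is_height z D lam h.
Proof.
move=> eqv [h_gt0 co_h P_h] max_h p a p_gt0 Da fix_a; split=> //.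
  exact/(eqv _ _ _ p_gt0 Da fix_a co_h).
by move=> m m_gt0 co /(eqv _ _ _ p_gt0 Da fix_a co); apply: max_h.
Qed.

Definition uniformly_primitive (T : eqType) (z : T -> seq T) (K : nat) : Prop :=
  forall n, K <= n -> forall b c, c \in letter_iter z n b.

Lemma primitive_uniformly (T : finType) (z : T -> seq T) lam a0 :
  (forall x, size (z x) = lam) -> primitive_on z (fun _ => True) ->
  a0 \in z a0 -> exists K, uniformly_primitive z K.
Proof.
move=> size_z prim loop_a0.
have a0_in_iter b : exists K, forall n, K <= n -> a0 \in letter_iter z n b.
  have [k _ in_k] := prim b I; exists k => n /subnKC <-.
  elim: (n - k) => [|j IH]; first by rewrite addn0 in_k.
  by rewrite addnS -addn1; apply: (mem_letter_iterD size_z IH); rewrite letter_iter1.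
have [K0 HK0] := @eventually_fin T (fun _ => True) _ (fun b _ => a0_in_iter b).
have [k1 _ in_k1] := prim a0 I.
exists (K0 + k1) => n le_n b c.
have le_k1n : k1 <= n by apply: leq_trans le_n; apply: leq_addl.
rewrite -(subnK le_k1n); apply: (mem_letter_iterD size_z (HK0 b I _ _) (in_k1 c I)).
by rewrite leq_subRL // addnC.
Qed.

Section ColumnExtension.
Variables (A : finType) (lam : nat) (theta : A -> seq A).
Hypothesis lam_gt1 : 1 < lam.
Hypothesis size_theta : forall a, size (theta a) = lam.

Let lam_gt0 : 0 < lam. Proof. exact: ltnW. Qed.

Definition colmap n t (b : A) : A := nth b (letter_iter theta n b) t.

Definition colset n t (S : {set A}) : {set A} := [set colmap n t b | b in S].

Lemma nth_letter_iter_colmap n t b d :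
  t < lam ^ n -> nth d (letter_iter theta n b) t = colmap n t b.
Proof. by move=> lt_t; apply: set_nth_default; rewrite (size_letter_iter size_theta). Qed.

Lemma colmapD n k i t b : i < lam ^ n -> t < lam ^ k ->
  colmap (n + k) (i * lam ^ k + t) b = colmap k t (colmap n i b).
Proof.
move=> lt_i lt_t; rewrite {1}/colmap (nth_letter_iterD size_theta _ b b lt_i lt_t).
by rewrite nth_letter_iter_colmap.
Qed.

Lemma colsetD n k i t S : i < lam ^ n -> t < lam ^ k ->
  colset (n + k) (i * lam ^ k + t) S = colset k t (colset n i S).
Proof.
by move=> lt_i lt_t; rewrite /colset -imset_comp; apply: eq_imset => b; apply: colmapD.
Qed.

Lemma column_colset k j : column theta k j = colset k j [set: A].
Proof. by apply/setP=> x; apply/imsetP/imsetP => -[b _ ->]; exists b. Qed.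

Notation Xs := (in_Xset theta lam).

Lemma Xset_colset n t M : Xs M -> t < lam ^ n -> Xs (colset n t M).
Proof.
move=> [[k [j [k_gt0 lt_j ->]]] min_M] lt_t.
have le_card : #|colset n t (column theta k j)| <= #|column theta k j| by apply: leq_imset_card.
split=> [|k' j' k'_gt0 lt_j']; last exact: leq_trans le_card (min_M _ _ k'_gt0 lt_j').
exists (k + n), (j * lam ^ n + t); split; first by rewrite addn_gt0 k_gt0.
  by rewrite expnD ltn_mul_add.
by rewrite !column_colset colsetD.
Qed.

Lemma colset_sync E k0 j0 S : 0 < k0 -> k0 <= E -> j0 < lam ^ k0 ->
  Xs (column theta k0 j0) -> Xs S -> colset E j0 S = column theta k0 j0.
Proof.
move=> k0_gt0 le_k0E lt_j0 [_ min_col] XS.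
have lt_0 : 0 < lam ^ (E - k0) by rewrite expn_gt0 lam_gt0.
rewrite -(subnK le_k0E) -{1}(add0n j0) -(mul0n (lam ^ k0)) colsetD //.
have [[k [j [k_gt0 lt_j eq_col]]] _] := Xset_colset (Xset_colset XS lt_0) lt_j0.
apply/eqP; rewrite eqEcard {2}eq_col min_col // andbT column_colset.
by apply: imsetS; apply: subsetT.
Qed.


Notation Th := (Theta theta lam).
Notation Xb := (in_Xbar theta lam).

Lemma size_Theta x : size (Th x) = lam.
Proof. by rewrite /Theta size_map size_iota. Qed.

Lemma nth_Theta x j d : j < lam -> nth d (Th x) j = (colmap 1 j x.1, colset 1 j x.2).
Proof.
move=> lt_j; rewrite /Theta (nth_map 0) ?size_iota // nth_iota // add0n.
by congr (_, _); [|apply: eq_imset => b]; rewrite /colmap letter_iter1.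
Qed.

Lemma nth_Theta_iter n x t d : t < lam ^ n ->
  nth d (letter_iter Th n x) t = (colmap n t x.1, colset n t x.2).
Proof.
elim: n x t => [|n IH] x t.
  rewrite expn0 ltnS leqn0 => /eqP ->; case: x => b S.
  by rewrite /colset /colmap /= imset_id.
move=> lt_t; rewrite -addn1 (divn_eq t lam) -[_ * lam]/(t %/ lam * lam ^ 1).
have lt_q : t %/ lam < lam ^ n by rewrite ltn_divLR // -expnSr.
have lt_r : t %% lam < lam ^ 1 by rewrite expn1 ltn_mod.
rewrite (nth_letter_iterD size_Theta _ d d lt_q lt_r) letter_iter1 nth_Theta // IH //=.
by rewrite -colmapD // -colsetD.
Qed.

Lemma fixpt_Theta p x r : 0 < p ->
  fixpt Th p x r = (fixpt theta p x.1 r, colset (p * r.+1) r x.2).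
Proof. by move=> p_gt0; rewrite /fixpt nth_Theta_iter // ltn_exp_mulS. Qed.

Lemma fixpt_Theta_fst p x : 0 < p -> nth x (letter_iter Th p x) 0 = x ->
  nth x.1 (letter_iter theta p x.1) 0 = x.1.
Proof. by move=> p_gt0; rewrite nth_Theta_iter ?expn_gt0 ?lam_gt0 // => /(congr1 fst). Qed.

Lemma Xbar_Theta_iter n x t d : Xb x -> t < lam ^ n -> Xb (nth d (letter_iter Th n x) t).
Proof.
move=> [XM x1_in] lt_t; rewrite nth_Theta_iter //.
by split; [apply: Xset_colset | apply: imset_f].
Qed.

Lemma Xbar_fixpt p x i : 0 < p -> Xb x -> Xb (fixpt Th p x i).
Proof. by move=> p_gt0 Xx; apply: Xbar_Theta_iter => //; apply: ltn_exp_mulS. Qed.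

Variable K : nat.
Hypothesis unif_theta : uniformly_primitive theta K.

Lemma Theta_reaches y : Xb y ->
  exists B, forall n, B <= n -> forall x, Xb x -> y \in letter_iter Th n x.
Proof.
case: y => b N; rewrite /in_Xbar /= => -[[[k0 [j0 [k0_gt0 lt_j0 eq_N]]] min_N] b_in].
have XN : Xs (column theta k0 j0) by rewrite -eq_N; split=> //; exists k0, j0.
move: b_in; rewrite eq_N => /imsetP [c _ ->].
exists (K + k0) => n le_n x [XM _].
have le_k0n : k0 <= n by apply: leq_trans le_n; apply: leq_addl.
rewrite -(subnK le_k0n); set n1 := n - k0.
have c_in : c \in letter_iter theta n1 x.1 by rewrite unif_theta // leq_subRL // addnC.
set i := index c (letter_iter theta n1 x.1).
have lt_i : i < lam ^ n1 by rewrite -(size_letter_iter size_theta n1 x.1) index_mem.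
have <- : nth (b, N) (letter_iter Th (n1 + k0) x) (i * lam ^ k0 + j0) =
          (colmap k0 j0 c, column theta k0 j0).
  have -> : c = colmap n1 i x.1 by rewrite /colmap /i nth_index.
  rewrite nth_Theta_iter ?expnD ?ltn_mul_add // colmapD // colsetD //.
  by rewrite (colset_sync k0_gt0 (leqnn k0) lt_j0 XN (Xset_colset XM lt_i)).
by rewrite mem_nth // (size_letter_iter size_Theta) expnD ltn_mul_add.
Qed.

Lemma Theta_primitive : primitive_on Th Xb.
Proof.
move=> x Xx; have [B HB] := @eventually_fin _ Xb
  (fun y n => forall x, Xb x -> y \in letter_iter Th n x) (fun y Xy => Theta_reaches Xy).
by exists B.+1 => // y Xy; apply: HB.
Qed.

Lemma divides_return_gcd_transfer p a p' a' m :
  0 < p -> nth a (letter_iter theta p a) 0 = a ->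
  0 < p' -> nth a' (letter_iter theta p' a') 0 = a' ->
  coprime m lam -> divides_return_gcd theta p a m -> divides_return_gcd theta p' a' m.
Proof.
move=> p_gt0 fix_a p'_gt0 fix_a' co dvd_ret r r_gt0 ret.
have occ i : exists K', forall n, K' <= n -> a \in letter_iter theta n (fixpt theta p a i).
  by exists K => n le_n; rewrite unif_theta.
have eq_mod := fixpt_eq_mod size_theta lam_gt1 p_gt0 fix_a co dvd_ret occ.
set E := p * (p' * (K + r)).
have le_KrE : K + r <= E by rewrite /E mulnA leq_pmull // muln_gt0 p_gt0.
have lt_r : r < lam ^ E.
  by rewrite (leq_trans (ltn_expl r lam_gt1)) // leq_pexp2l // (leq_trans (leq_addl K r)).
have a'_in : a' \in letter_iter theta E a by rewrite unif_theta // (leq_trans (leq_addr r K)).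
set q := index a' (letter_iter theta E a).
have lt_q : q < lam ^ E by rewrite -(size_letter_iter size_theta E a) index_mem.
have v_q : fixpt theta p a q = a'.
  by rewrite (fixpt_nth size_theta lam_gt1 p_gt0 fix_a lt_q) nth_index.
have shift t : t < lam ^ E -> fixpt theta p a (q * lam ^ E + t) = fixpt theta p' a' t.
  have E' : E = p' * (p * (K + r)) by rewrite /E mulnCA.
  move=> lt_t; have lt_t' : t < lam ^ (p' * (p * (K + r))) by rewrite -E'.
  rewrite fixpt_block ?dvdn_mulr // v_q (fixpt_nth size_theta lam_gt1 p'_gt0 fix_a' lt_t').
  by rewrite -E' !nth_letter_iter_colmap.
have := ret; rewrite -(shift r lt_r) -(shift 0) ?expn_gt0 ?lam_gt0 // => /eq_mod /eqP.
by rewrite eqn_modDl mod0n.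
Qed.

Lemma divides_return_gcd_Theta p x m :
  0 < p -> Xb x -> nth x (letter_iter Th p x) 0 = x -> coprime m lam ->
  divides_return_gcd Th p x m <-> divides_return_gcd theta p x.1 m.
Proof.
move=> p_gt0 Xx fix_x co.
split=> dvd_ret r r_gt0 ret; last first.
  by move: ret; rewrite !fixpt_Theta // => -[/(dvd_ret r r_gt0)].
have occ i : exists B, forall n, B <= n -> x \in letter_iter Th n (fixpt Th p x i).
  have [B HB] := Theta_reaches Xx.
  by exists B => n le_n; apply: HB le_n _ (Xbar_fixpt i p_gt0 Xx).
have eq_mod := fixpt_eq_mod size_Theta lam_gt1 p_gt0 fix_x co dvd_ret occ.
case: (Xx) => -[[k0 [j0 [k0_gt0 lt_j0 eq_M]]] _] _.
have XM : Xs (column theta k0 j0) by rewrite -eq_M; exact: Xx.1.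
set E := p * k0.
have lt_j0E : j0 < lam ^ E by rewrite (leq_trans lt_j0) // leq_pexp2l // leq_pmull.
have block i : fixpt Th p x (i * lam ^ E + j0) = (colmap E j0 (fixpt theta p x.1 i), x.2).
  have XS := Xset_colset Xx.1 (ltn_exp_mulS i lam_gt1 p_gt0).
  rewrite (fixpt_block size_Theta lam_gt1 p_gt0 fix_x) ?dvdn_mulr //.
  rewrite nth_Theta_iter // fixpt_Theta //=.
  by rewrite (colset_sync k0_gt0 (leq_pmull _ p_gt0) lt_j0 XM XS) eq_M.
have := block r; rewrite ret -(block 0) => /eq_mod /eqP.
by rewrite eqn_modDr eqn_modMr_coprime ?coprimeXr // mod0n.
Qed.

Lemma height_Theta a0 : nth a0 (theta a0) 0 = a0 ->
  exists h, is_height theta (fun _ => True) lam h /\ is_height Th Xb lam h.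
Proof.
rewrite -letter_iter1 => fix_a0.
pose P m := divides_return_gcd theta 1 a0 m.
have P_theta p a m : 0 < p -> True -> nth a (letter_iter theta p a) 0 = a ->
    coprime m lam -> divides_return_gcd theta p a m <-> P m.
  by move=> p_gt0 _ fix_a co; split; apply: divides_return_gcd_transfer.
have P_Theta p x m : 0 < p -> Xb x -> nth x (letter_iter Th p x) 0 = x ->
    coprime m lam -> divides_return_gcd Th p x m <-> P m.
  move=> p_gt0 Xx fix_x co; rewrite divides_return_gcd_Theta //.
  exact: P_theta (fixpt_Theta_fst p_gt0 fix_x) co.
have [r0 r0_gt0 ret0] : exists2 r0, 0 < r0 & fixpt theta 1 a0 r0 = fixpt theta 1 a0 0.
  set v1 := fixpt theta 1 a0 1.
  have a0_in : a0 \in letter_iter theta K v1 by rewrite unif_theta.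
  have lt_s : index a0 (letter_iter theta K v1) < lam ^ K.
    by rewrite -(size_letter_iter size_theta K v1) index_mem.
  exists (1 * lam ^ K + index a0 (letter_iter theta K v1)).
    by rewrite mul1n addn_gt0 expn_gt0 lam_gt0.
  by rewrite fixpt_block ?dvd1n // fixpt0 // nth_index.
have [h [h_gt0 co_h P_h] max_h] :=
  @bounded_has_max (fun m => [/\ 0 < m, coprime m lam & P m]) 1 r0
    (And3 isT (coprime1n lam) (fun r _ _ => dvd1n r))
    (fun m '(And3 m_gt0 _ P_m) => dvdn_leq r0_gt0 (P_m r0 r0_gt0 ret0)).
exists h; split; apply: (is_height_intro (P := P)) => // m m_gt0 co P_m; exact: max_h.
Qed.

End ColumnExtension.

Theorem mainTheorem13 (A : finType) (lam : nat) (theta : A -> seq A)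
  (Hlam : 2 <= lam)
  (Hlen : forall a, size (theta a) = lam)
  (Hprim : primitive_on theta (fun _ => True))
  (Ha0 : exists a0, nth a0 (theta a0) 0 = a0)
  (Hinj : injective theta)
  (Hinf : subshift_infinite theta) :
  primitive_on (Theta theta lam) (in_Xbar theta lam) /\
  exists h, is_height theta (fun _ => True) lam h /\
            is_height (Theta theta lam) (in_Xbar theta lam) lam h.
Proof.
have [a0 fix_a0] := Ha0.
have loop_a0 : a0 \in theta a0 by rewrite -{1}fix_a0 mem_nth // Hlen ltnW.
have [K unif_theta] := primitive_uniformly Hlen Hprim loop_a0.
split; first exact: (Theta_primitive Hlam Hlen unif_theta).
exact: (height_Theta Hlam Hlen unif_theta fix_a0).
Qed.
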